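(* Let $\sqrt5$ denote the square root of $5$ in $\mathbb{Z}_{11}$ with $\sqrt5\equiv7\pmod{11}$. Let $\alpha\ge1$ and $j\in\{1,\dots,10\}$, and let $z\in\mathbb{Z}_{11}$ satisfy $z\equiv\frac{2}{\sqrt5}+j\cdot11^{2\alpha-1}\pmod{11^{2\alpha}}$. Then $f_z(y)=y^2-\sqrt5\,zy+1$ has no root in $\mathbb{Z}_{11}$. *)

(* 11-adic integers Z_p modelled as the inverse limit
   lim Z/p^n Z: a p-adic integer is a sequence of integers (x_n) with
   x_{n+1} = x_n (mod p^n); two sequences represent the same p-adic
   integer iff x_n = y_n (mod p^n) for all n. *)
From mathcomp Require Import all_boot all_order all_algebra ring.
Set Implicit Arguments. Unset Strict Implicit. Unset Printing Implicit Defensive.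
Import Order.TTheory GRing.Theory Num.Theory.
Local Open Scope ring_scope.

Definition coherent (p : nat) (x : nat -> int) : Prop :=
  forall n : nat, (x n.+1 = x n %[mod (p ^ n)%:Z])%Z.

Record Zpadic (p : nat) := MkZp { zseq : nat -> int; zcoh : coherent p zseq }.

Lemma coh_dvd (p : nat) (x : nat -> int) :
  coherent p x -> forall n, ((p ^ n)%:Z %| x n.+1 - x n)%Z.
Proof. by move=> h n; rewrite -eqz_mod_dvd; apply/eqP; apply: h. Qed.

Lemma dvd_coh (p : nat) (x : nat -> int) :
  (forall n, ((p ^ n)%:Z %| x n.+1 - x n)%Z) -> coherent p x.
Proof. by move=> h n; apply/eqP; rewrite eqz_mod_dvd. Qed.

Lemma padd_coh p (x y : Zpadic p) : coherent p (fun n => zseq x n + zseq y n).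
Proof.
apply: dvd_coh => n.
have ->: zseq x n.+1 + zseq y n.+1 - (zseq x n + zseq y n)
        = (zseq x n.+1 - zseq x n) + (zseq y n.+1 - zseq y n) by ring.
by apply: rpredD; exact: (coh_dvd (zcoh _) n).
Qed.

Lemma popp_coh p (x : Zpadic p) : coherent p (fun n => - zseq x n).
Proof.
apply: dvd_coh => n.
have ->: - zseq x n.+1 - - zseq x n = - (zseq x n.+1 - zseq x n) by ring.
by rewrite rpredN; exact: (coh_dvd (zcoh _) n).
Qed.

Lemma pmul_coh p (x y : Zpadic p) : coherent p (fun n => zseq x n * zseq y n).
Proof.
apply: dvd_coh => n.
have ->: zseq x n.+1 * zseq y n.+1 - zseq x n * zseq y n
        = (zseq x n.+1 - zseq x n) * zseq y n.+1
          + zseq x n * (zseq y n.+1 - zseq y n) by ring.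
by apply: rpredD; [apply: dvdz_mulr | apply: dvdz_mull]; exact: (coh_dvd (zcoh _) n).
Qed.

Lemma pconst_coh p (a : int) : coherent p (fun _ => a).
Proof. by []. Qed.

Definition padd p (x y : Zpadic p) : Zpadic p := MkZp (padd_coh x y).
Definition popp p (x : Zpadic p) : Zpadic p := MkZp (popp_coh x).
Definition psub p (x y : Zpadic p) : Zpadic p := padd x (popp y).
Definition pmul p (x y : Zpadic p) : Zpadic p := MkZp (pmul_coh x y).
Definition pconst p (a : int) : Zpadic p := MkZp (pconst_coh p a).

Definition peq p (x y : Zpadic p) : Prop :=
  forall n : nat, (zseq x n = zseq y n %[mod (p ^ n)%:Z])%Z.

(* congruence x = y (mod p^k) in Z_p, i.e. x - y in p^k Z_p *)
Definition pcong p (x y : Zpadic p) (k : nat) : Prop :=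
  (zseq x k = zseq y k %[mod (p ^ k)%:Z])%Z.

From mathcomp Require Import all_boot all_order all_algebra ring zify.
Import GRing.Theory Num.Theory.
Local Open Scope ring_scope.

(* Completing the square, (2y - sz)^2 = 4 f_z(y) + (sz)^2 - 4.  Writing
   q = 11^(2a-1), we have sz = 2st + sjq = 2 + sjq (mod 11q), so if f_z(y) = 0
   then (2y - sz)^2 = 4sjq (mod 11q).  Hence 11^(2a-1) divides the square
   (2y - sz)^2, so does 11^(2a) by parity of valuations, and therefore 11
   divides 4sj = 28j (mod 11), which is impossible for 1 <= j <= 10.  Only
   s = 7 (mod 11) and st = 1 are used. *)

Lemma zseq_mod_le {p : nat} (x : Zpadic p) (m n : nat) : (m <= n)%N ->
  (zseq x n = zseq x m %[mod (p ^ m)%:Z])%Z.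
Proof.
elim: n => [|n IHn]; first by rewrite leqn0 => /eqP->.
rewrite leq_eqVlt => /orP[/eqP->//|]; rewrite ltnS => le_mn.
apply/eqP; rewrite eqz_mod_dvd.
have ->: zseq x n.+1 - zseq x m
       = (zseq x n.+1 - zseq x n) + (zseq x n - zseq x m) by ring.
apply: rpredD; last by rewrite -eqz_mod_dvd; apply/eqP; exact: IHn.
apply: dvdz_trans (coh_dvd (zcoh x) n).
by rewrite /dvdz -topredE /= dvdn_exp2l // ltnW.
Qed.

Lemma dvdn_sqr_odd_pow (p n m : nat) : prime p ->
  (p ^ n.*2.+1 %| m ^ 2)%N -> (p ^ n.*2.+2 %| m ^ 2)%N.
Proof.
move=> p_pr; have [->|m_gt0] := posnP m; first by rewrite exp0n ?dvdn0.
have m2_gt0 : (0 < m ^ 2)%N by rewrite expn_gt0 m_gt0.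
by rewrite !pfactor_dvdn // lognX; lia.
Qed.

Lemma dvdz_sqr_odd_pow (p n : nat) (w : int) : prime p ->
  ((p ^ n.*2.+1)%:Z %| w * w)%Z -> ((p ^ n.*2.+2)%:Z %| w * w)%Z.
Proof. by move=> p_pr; rewrite /dvdz -!topredE /= abszM mulnn; exact: dvdn_sqr_odd_pow. Qed.

Lemma discriminant_mod {d S T Z Y c : int} :
  (S * T = 1 %[mod d])%Z -> (Z = 2 * T + c %[mod d])%Z ->
  (Y * Y - S * Z * Y + 1 = 0 %[mod d])%Z -> (d %| c * c)%Z ->
  (d %| (2 * Y - S * Z) ^+ 2 - 4 * S * c)%Z.
Proof.
move=> /eqP; rewrite eqz_mod_dvd => dB /eqP; rewrite eqz_mod_dvd => dA.
move=> /eqP; rewrite eqz_mod_dvd => dC dc.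
set A := Z - _ in dA; set B := S * T - 1 in dB; set C := _ - 0 in dC.
have ->: (2 * Y - S * Z) ^+ 2 - 4 * S * c
       = 4 * C + (S * A + 2 * B) * (4 + S * A + 2 * B + 2 * S * c)
         + S * S * (c * c) by rewrite /A /B /C; ring.
apply: rpredD; first apply: rpredD.
- exact: dvdz_mull.
- by apply: dvdz_mulr; apply: rpredD; apply: dvdz_mull.
- exact: dvdz_mull.
Qed.

Lemma prime_dvd_of_root_mod {p n : nat} {j S T Z Y : int} : prime p ->
  (S * T = 1 %[mod (p ^ n.*2.+2)%:Z])%Z ->
  (Z = 2 * T + j * (p ^ n.*2.+1)%:Z %[mod (p ^ n.*2.+2)%:Z])%Z ->
  (Y * Y - S * Z * Y + 1 = 0 %[mod (p ^ n.*2.+2)%:Z])%Z ->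
  (p%:Z %| 4 * S * j)%Z.
Proof.
move=> p_pr hB hA hC; set q : int := (p ^ n.*2.+1)%:Z.
have qp : (p ^ n.*2.+2)%:Z = q * p%:Z by rewrite /q -PoszM -expnSr.
have p_dvd_q : (p%:Z %| q)%Z by rewrite /q /dvdz -topredE /= dvdn_exp.
have q_neq0 : q != 0 by rewrite /q eqz_nat -lt0n expn_gt0 prime_gt0.
have dq2 : ((p ^ n.*2.+2)%:Z %| (j * q) * (j * q))%Z.
  have ->: (j * q) * (j * q) = q * (j * j * q) by ring.
  by rewrite qp dvdz_mul2l // dvdz_mull.
have disc := discriminant_mod hB hA hC dq2; set W := 2 * Y - S * Z in disc.
have dW : ((p ^ n.*2.+2)%:Z %| W * W)%Z.
  apply: dvdz_sqr_odd_pow => //; rewrite -expr2.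
  have ->: W ^+ 2 = (W ^+ 2 - 4 * S * (j * q)) + q * (4 * S * j) by ring.
  rewrite rpredD ?dvdz_mulr //; apply: dvdz_trans disc.
  by rewrite qp dvdz_mulr.
have: ((p ^ n.*2.+2)%:Z %| q * (4 * S * j))%Z.
  have ->: q * (4 * S * j) = W * W - (W ^+ 2 - 4 * S * (j * q)) by ring.
  exact: rpredB.
by rewrite qp dvdz_mul2l.
Qed.

Theorem lemma5p6 (s t z : Zpadic 11) (alpha j : nat) :
  peq (pmul s s) (pconst 11 5) ->
  pcong s (pconst 11 7) 1 ->
  peq (pmul s t) (pconst 11 1) ->
  (1 <= alpha)%N -> (1 <= j <= 10)%N ->
  pcong z (padd (pmul (pconst 11 2) t)
                (pconst 11 (j * 11 ^ (2 * alpha - 1))%N%:Z)) (2 * alpha) ->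
  ~ exists y : Zpadic 11,
      peq (padd (psub (pmul y y) (pmul (pmul s z) y)) (pconst 11 1))
          (pconst 11 0).
Proof.
move=> _ s7 st1 a_ge1 j_range hz [y hy].
have [n alphaE] : exists n, alpha = n.+1 by exists alpha.-1; lia.
have [e1 e2] : (2 * alpha - 1 = n.*2.+1)%N /\ (2 * alpha = n.*2.+2)%N by lia.
rewrite /pcong e1 e2 /= PoszM in hz.
have := prime_dvd_of_root_mod (isT : prime 11) (st1 _) hz (hy _).
set S := zseq s n.*2.+2 => dS.
have S7 : (11 %| S - 7)%Z.
  rewrite -eqz_mod_dvd; apply/eqP.
  by rewrite (@zseq_mod_le _ s 1 n.*2.+2) // expn1; exact: s7.
have: (11 %| (28 * j)%N%:Z)%Z.
  have ->: (28 * j)%N%:Z = 4 * S * j%:Z - 4 * j%:Z * (S - 7) by rewrite PoszM; ring.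
  by apply: rpredB => //; apply: dvdz_mull.
rewrite /dvdz -topredE /= Euclid_dvdM //= => /dvdn_leq; lia.
Qed.
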